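(* For $n\ge2$ and variables $x_1,\dots,x_{n-1}$, $y_1,\dots,y_{n-1}$, $z_1,\dots,z_n$, define $$\hat P_n=\sum_{\sigma\in S_n}(-1)^{\ell(\sigma)}\prod_{m=1}^{n-1}\Big(\prod_{k=1}^{m}(1+y_mz_{\sigma(k)})\prod_{k=m+1}^{n}(1-x_mz_{\sigma(k)})\Big),$$ where $\ell(\sigma)$ is the length (number of inversions) of $\sigma$. Then $$\hat P_n=\prod_{i=1}^{n-1}(x_i+y_i)\prod_{1\le i<j\le n-1}(x_i+y_j)\prod_{1\le i<j\le n}(z_i-z_j).$$ *)

From HB Require Import structures.
From mathcomp Require Import all_boot all_order all_algebra all_fingroup.
Set Implicit Arguments. Unset Strict Implicit. Unset Printing Implicit Defensive.
Import Order.TTheory GRing.Theory Num.Theory.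

(* Let G_k(t) = prod_m (1 + c_{k,m} t) with c_{k,m} = -y_m for k <= m and
   c_{k,m} = x_m for m < k. The sum is the Leibniz expansion of the
   determinant of [G_k(-z_j)]_{k,j}, which factors as (coefficients of the
   G_k) times (Vandermonde matrix in the -z_j); the latter contributes
   prod_{i<j} (z_i - z_j). Since G_{k+1} - G_k = (x_k + y_k) t G'_k, where G'
   is built from x and the shifted y, subtracting from each row of the
   coefficient matrix the previous one leaves the first column e_1 and a minor
   equal to diag(x_k + y_k) times the coefficient matrix of the G'_k, so its
   determinant follows by induction on n. *)

From HB Require Import structures.
From mathcomp Require Import all_boot all_order all_algebra all_fingroup.
From mathcomp Require Import zify ring.
Set Implicit Arguments. Unset Strict Implicit. Unset Printing Implicit Defensive.
Import GRing.Theory.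
Local Open Scope ring_scope.

Section SubdiagonalShift.
Variable R : comNzRingType.

Definition shift_mx n : 'M[R]_n := \matrix_(k, l) (k == l.+1 :> nat)%:R.

Lemma det_1_sub_shift_mx n : \det (1%:M - shift_mx n) = 1.
Proof.
rewrite det_trig.
  by apply: big1 => i _; rewrite !mxE eqxx (ltn_eqF (ltnSn i)) subr0.
apply/forallP => i; apply/forallP => j; apply/implyP => lt_ij; rewrite !mxE.
have ne_ij : (i == j) = false by exact: ltn_eqF.
by rewrite ne_ij (ltn_eqF (ltn_trans lt_ij (ltnSn j))) subr0.
Qed.

Lemma det_sub_shift_mx n (M : 'M[R]_n) : \det (M - shift_mx n *m M) = \det M.
Proof. by rewrite -[M in M - _]mul1mx -mulmxBl det_mulmx det_1_sub_shift_mx mul1r. Qed.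

Lemma shift_mx_mul_row0 n p (M : 'M[R]_(n.+1, p)) j : (shift_mx n.+1 *m M) ord0 j = 0.
Proof. by rewrite mxE big1 // => l _; rewrite mxE mul0r. Qed.

Lemma shift_mx_mul_lift n p (M : 'M[R]_(n.+1, p)) (k : 'I_n) j :
  (shift_mx n.+1 *m M) (lift ord0 k) j = M (widen_ord (leqnSn n) k) j.
Proof.
rewrite mxE (bigD1 (widen_ord (leqnSn n) k)) //= big1.
  by rewrite !mxE lift0 eqxx mul1r addr0.
move=> l ne_lk; rewrite mxE lift0 eqSS (_ : (k == l :> nat) = false) ?mul0r //.
by apply/negbTE; apply: contra ne_lk => /eqP eq_kl; apply/eqP/val_inj.
Qed.

End SubdiagonalShift.

Lemma prod_ltn_ordS (R : comNzRingType) (f : nat -> nat -> R) N :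
  \prod_(i < N.+1) \prod_(j < N.+1 | (i < j)%N) f i j =
  \prod_(i < N) f i i.+1 * \prod_(i < N) \prod_(j < N | (i < j)%N) f i j.+1.
Proof.
rewrite big_ord_recr /= [X in _ * X]big1 ?mulr1; last first.
  by move=> j; rewrite ltnNge -ltnS ltn_ord.
rewrite -big_split /=; apply: eq_bigr => i _.
rewrite big_mkcond big_ord_recl /= mul1r.
under eq_bigr => j _ do rewrite /bump leq0n add1n ltnS.
rewrite -(big_mkcond (fun j : 'I_N => (i <= j)%N)) (bigD1 i) //=; congr (_ * _).
by apply: eq_bigl => j; rewrite ltn_neqAle andbC eq_sym.
Qed.

Section StairPolynomials.
Variable R : comNzRingType.

Definition linfac (c : R) : {poly R} := 1 + c *: 'X.

Definition stair_poly N (xs ys : nat -> R) k : {poly R} :=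
  \prod_(m < N) linfac (if (k <= m)%N then - ys m else xs m).

Lemma horner_linfac c t : (linfac c).[t] = 1 + c * t.
Proof. by rewrite /linfac hornerD hornerZ hornerX hornerC. Qed.

Lemma size_linfac c : (size (linfac c) <= 2)%N.
Proof.
apply: leq_trans (size_polyD _ _) _.
by rewrite geq_max size_poly1 (leq_trans (size_scale_leq _ _)) // size_polyX.
Qed.

Lemma size_prod_linfac N (c : nat -> R) : (size (\prod_(m < N) linfac (c m))%R <= N.+1)%N.
Proof.
elim: N => [|N IH]; first by rewrite big_ord0 size_poly1.
rewrite big_ord_recr /=; apply: leq_trans (size_polyMleq _ _) _.
by move: IH (size_linfac (c N)); set a := size _; set b := size _; lia.
Qed.

Lemma size_stair_poly N xs ys k : (size (stair_poly N xs ys k) <= N.+1)%N.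
Proof. exact: (size_prod_linfac N (fun m => if (k <= m)%N then - ys m else xs m)). Qed.

Lemma coef0_stair_poly N xs ys k : (stair_poly N xs ys k)`_0 = 1.
Proof.
rewrite -horner_coef0 horner_prod big1 // => m _.
by rewrite horner_linfac mulr0 addr0.
Qed.

Lemma stair_polyS N xs ys k :
  stair_poly N.+1 xs ys k = linfac (if k is 0 then - ys 0 else xs 0) *
                            stair_poly N (xs \o succn) (ys \o succn) k.-1.
Proof.
rewrite /stair_poly big_ord_recl; congr (_ * _); first by case: k.
by apply: eq_bigr => i _; case: k.
Qed.

Lemma stair_poly0 N xs xs' ys : stair_poly N xs ys 0 = stair_poly N xs' ys 0.
Proof. exact: eq_bigr. Qed.

Lemma stair_polyS_sub N xs ys k : (k < N.+1)%N ->
  stair_poly N.+1 xs ys k.+1 - stair_poly N.+1 xs ys k =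
  (xs k + ys k) *: ('X * stair_poly N xs (ys \o succn) k).
Proof.
elim: k N xs ys => [|k IH] N xs ys lt_kSN.
  rewrite !stair_polyS /= (stair_poly0 N xs (xs \o succn)) -mulrBl /linfac.
  by rewrite scalerAl -!mul_polyC rmorphN rmorphD /=; ring.
case: N lt_kSN => [//|N] lt_kSN.
rewrite [in LHS]stair_polyS [X in _ - X]stair_polyS /= -mulrBr IH //.
by rewrite [stair_poly N.+1 _ _ _]stair_polyS /= -!scalerAr mulrCA.
Qed.

Definition stair_coefmx N xs ys : 'M[R]_N.+1 :=
  \matrix_(k, i) (stair_poly N xs ys k)`_i.

Lemma det_stair_coefmx N xs ys : \det (stair_coefmx N xs ys) =
  \prod_(i < N) (xs i + ys i) * \prod_(i < N) \prod_(j < N | (i < j)%N) (xs i + ys j).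
Proof.
elim: N xs ys => [|N IH] xs ys.
  by rewrite det_mx11 mxE coef0_stair_poly !big_ord0 mulr1.
set M := stair_coefmx N.+1 xs ys; rewrite -det_sub_shift_mx.
set D := M - _.
have D_entry k j : D k j = M k j - (shift_mx R _ *m M) k j.
  by rewrite [LHS]mxE [X in _ + X]mxE.
have D_row0 j : D ord0 j = M ord0 j by rewrite D_entry shift_mx_mul_row0 subr0.
have D_lift k j : D (lift ord0 k) j = M (lift ord0 k) j - M (widen_ord (leqnSn _) k) j.
  by rewrite D_entry shift_mx_mul_lift.
have minor_D : row' ord0 (col' ord0 D) =
    diag_mx (\row_k (xs k + ys k)) *m stair_coefmx N xs (ys \o succn).
  apply/matrixP => k i; rewrite mul_diag_mx [LHS]mxE [LHS]mxE D_lift !mxE !lift0 /=.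
  by rewrite -coefB stair_polyS_sub // coefZ coefXM.
rewrite (expand_det_col _ ord0) [in LHS]big_ord_recl [X in _ + X]big1 ?addr0; last first.
  by move=> k _; rewrite D_lift !mxE !coef0_stair_poly subrr mul0r.
rewrite D_row0 mxE coef0_stair_poly mul1r /cofactor expr0 mul1r minor_D.
rewrite det_mulmx det_diag IH (prod_ltn_ordS (fun i j => xs i + ys j)).
under eq_bigr do rewrite mxE.
by rewrite [in RHS]big_ord_recr big_ord_recr /=; ring.
Qed.

Lemma stair_evalmx_factor N xs ys (a : 'I_N.+1 -> R) :
  \matrix_(k, j) (stair_poly N xs ys k).[a j] =
  stair_coefmx N xs ys *m Vandermonde N.+1 (\row_j a j).
Proof.
apply/matrixP => k j; rewrite !mxE (horner_coef_wide _ (size_stair_poly _ _ _ _)).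
by apply: eq_bigr => i _; rewrite !mxE.
Qed.

Lemma det_stair_evalmx N (x y : 'I_N.+1 -> R) (z : 'I_N.+2 -> R) :
  \det (\matrix_(k, j)
        (stair_poly N.+1 (fun m => x (inord m)) (fun m => y (inord m)) k).[- z j]) =
  \sum_(s : 'S_N.+2) (-1) ^+ odd_perm s *
     \prod_(m < N.+1) ((\prod_(k < N.+2 | (k <= m)%N) (1 + y m * z (s k))) *
                    (\prod_(k < N.+2 | (m < k)%N) (1 - x m * z (s k)))).
Proof.
apply: eq_bigr => s _; congr (_ * _).
under [RHS]eq_bigr do rewrite big_mkcond [X in _ * X]big_mkcond -big_split.
rewrite [RHS]exchange_big; apply: eq_bigr => k _.
rewrite mxE horner_prod; apply: eq_bigr => m _.
rewrite horner_linfac inord_val ltnNge.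
by case: (k <= m)%N; rewrite /= ?mulr1 ?mul1r ?mulrNN ?mulrN.
Qed.

End StairPolynomials.

Theorem mainTheorem7 (R : comNzRingType) (n : nat) (hn : (2 <= n)%N)
    (x y : 'I_n.-1 -> R) (z : 'I_n -> R) :
  \sum_(s : 'S_n) (-1) ^+ odd_perm s *
     \prod_(m < n.-1)
        ((\prod_(k < n | (k <= m)%N) (1 + y m * z (s k))) *
         (\prod_(k < n | (m < k)%N) (1 - x m * z (s k))))
  = (\prod_(i < n.-1) (x i + y i)) *
    (\prod_(i < n.-1) \prod_(j < n.-1 | (i < j)%N) (x i + y j)) *
    (\prod_(i < n) \prod_(j < n | (i < j)%N) (z i - z j)).
Proof.
case: n hn x y z => [|[|N]] // _ x y z /=.
rewrite -det_stair_evalmx stair_evalmx_factor det_mulmx.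
rewrite det_stair_coefmx det_Vandermonde; congr (_ * _ * _).
- by apply: eq_bigr => i _; rewrite !inord_val.
- by apply: eq_bigr => i _; apply: eq_bigr => j _; rewrite !inord_val.
- by apply: eq_bigr => i _; apply: eq_bigr => j _; rewrite !mxE opprK addrC.
Qed.
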